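(* Let $\omega$ be a substitution rule on $\mathbb{R}$ whose alphabet has more than one element, all prototiles having intervals as supports, and which is primitive and irreducible. Let $\mathcal{T}_0$ be a repetitive fixed point of $\omega$ and let $\mathcal{T}\in X_{\mathcal{T}_0}$. Then for every tile $T\in\mathcal{T}$ and every nonzero $v\in\mathbb{R}$, the set $\{T+kv: k\in\mathbb{N}\}$ is not contained in $\mathcal{T}$. Consequently, for every nonempty finite $\mathcal{T}_0$-legal patch $\mathcal{P}$ and every $v\neq0$ there is $n$ such that $\bigcup_{k=1}^n(\mathcal{P}+kv)$ is not $\mathcal{T}_0$-legal.
   Context: A tile in $\mathbb{R}$ is a compact set equal to the closure of its interior, possibly labeled from a finite set. Patches: sets of tiles with pairwise disjoint interiors; tilings: patches with support $\mathbb{R}$; a patch $\mathcal{P}$ is $\mathcal{T}$-legal if $\mathcal{P}+x\subset\mathcal{T}$ for some $x$. A substitution rule on $\mathbb{R}$: finite alphabet $\mathcal{A}=\{T_1,\dots,T_m\}$ of prototiles, expansion factor $\lambda>1$, and map $\omega$ sending each $T_j$ to a finite patch of translates of prototiles with $\operatorname{supp}\omega(T_j)=\lambda\operatorname{supp}T_j$, extended by $\omega(P+x)=\omega(P)+\lambda x$ and unions. Its substitution matrix $M_\omega$ has $(i,j)$ entry equal to the number of translates of $T_i$ in $\omega(T_j)$; $\omega$ is primitive if some power of $M_\omega$ has all entries positive and irreducible if the characteristic polynomial of $M_\omega$ is irreducible over $\mathbb{Q}$. A fixed point is a tiling $\mathcal{T}_0$ of translates of prototiles with $\omega(\mathcal{T}_0)=\mathcal{T}_0$;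 it is repetitive if every finite patch occurring in it occurs as a translate in every interval of some fixed length. The hull $X_{\mathcal{T}_0}$ is the closure of $\{\mathcal{T}_0+x:x\in\mathbb{R}\}$ in the local matching topology (two patches are close if, after translating each by a small amount, they agree on a large interval around $0$). *)

From Stdlib Require Import Reals Rtopology List.
From mathcomp Require Import all_boot all_algebra.

Set Implicit Arguments.
Unset Strict Implicit.
Unset Printing Implicit Defensive.

Local Open Scope R_scope.

Record tile := Tile { tsupp : R -> Prop ; tlab : nat }.

Definition is_tile (T : tile) : Prop :=
  (exists y, tsupp T y) /\ compact (tsupp T) /\
  (forall y, tsupp T y <-> adherence (interior (tsupp T)) y).

Definition tr (T : tile) (x : R) : tile :=
  Tile (fun y => tsupp T (y - x)) (tlab T).

Definition tset := tile -> Prop.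
Definition ptr (P : tset) (x : R) : tset :=
  fun T => exists T', P T' /\ T = tr T' x.
Definition of_list (l : seq tile) : tset := fun T => List.In T l.

Definition is_patch (P : tset) : Prop :=
  (forall T, P T -> is_tile T) /\
  (forall T1 T2, P T1 -> P T2 -> T1 <> T2 ->
     forall y, ~ (interior (tsupp T1) y /\ interior (tsupp T2) y)).
Definition is_tiling (P : tset) : Prop :=
  is_patch P /\ forall y, exists T, P T /\ tsupp T y.

Definition legal (Q P : tset) : Prop :=
  exists x, forall T, P T -> Q (tr T x).

(** Substitution rule data: m prototiles [proto], expansion [lam],
    and [om j] the list of pairs (i, a) meaning the tile proto i + a of
    the patch omega(proto j). *)
Definition subst_patch (m : nat) (proto : 'I_m -> tile)
  (om : 'I_m -> seq ('I_m * R)) (j : 'I_m) : seq tile :=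
  map (fun p => tr (proto p.1) p.2) (om j).

Definition is_subst_rule (m : nat) (proto : 'I_m -> tile) (lam : R)
  (om : 'I_m -> seq ('I_m * R)) : Prop :=
  1 < lam /\
  (forall j, is_tile (proto j)) /\
  (forall i j x, i <> j -> proto i <> tr (proto j) x) /\
  (forall j, List.NoDup (subst_patch proto om j)) /\
  (forall j, is_patch (of_list (subst_patch proto om j))) /\
  (forall j y, (exists T, List.In T (subst_patch proto om j) /\ tsupp T y)
               <-> (exists z, tsupp (proto j) z /\ y = lam * z)).

(** Prototile with an interval as support (a nondegenerate closed interval,
    as it must be a tile). *)
Definition interval_support (T : tile) : Prop :=
  exists a b, a < b /\ forall y, tsupp T y <-> a <= y <= b.

Definition subst_mx (m : nat) (om : 'I_m -> seq ('I_m * R)) : 'M[rat]_m :=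
  \matrix_(i < m, j < m) ((count (fun p : 'I_m * R => p.1 == i) (om j))%:R)%R.

Definition mxpow (m : nat) (A : 'M[rat]_m) (k : nat) : 'M[rat]_m :=
  iter k (mulmx A) 1%:M%R.

Definition primitive_mx (m : nat) (A : 'M[rat]_m) : Prop :=
  exists k : nat, forall i j : 'I_m, (0 < mxpow A k i j)%R.

Definition irreducible_mx (m : nat) (A : 'M[rat]_m) : Prop :=
  irreducible_poly (char_poly A).

(** omega applied to a set of translates of prototiles, using
    omega(P + x) = omega(P) + lam x and unions. *)
Definition subst_set (m : nat) (proto : 'I_m -> tile) (lam : R)
  (om : 'I_m -> seq ('I_m * R)) (P : tset) : tset :=
  fun T => exists (j : 'I_m) (x : R), P (tr (proto j) x) /\
    exists p, List.In p (om j) /\ T = tr (tr (proto p.1) p.2) (lam * x).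

Definition fixed_point (m : nat) (proto : 'I_m -> tile) (lam : R)
  (om : 'I_m -> seq ('I_m * R)) (T0 : tset) : Prop :=
  is_tiling T0 /\
  (forall T, T0 T -> exists (j : 'I_m) (x : R), T = tr (proto j) x) /\
  (forall T, subst_set proto lam om T0 T <-> T0 T).

Definition repetitive (T0 : tset) : Prop :=
  forall l : seq tile, (forall T, List.In T l -> T0 T) ->
  exists L, 0 < L /\ forall a, exists x,
    (forall T, List.In T l -> T0 (tr T x)) /\
    (forall T y, List.In T l -> tsupp (tr T x) y -> a <= y <= a + L).

Definition agree_on (P Q : tset) (r : R) : Prop :=
  forall T, (P T /\ exists y, -r <= y <= r /\ tsupp T y) <->
            (Q T /\ exists y, -r <= y <= r /\ tsupp T y).

(** Hull: closure of the translation orbit of T0 in the local topology. *)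
Definition in_hull (T0 T : tset) : Prop :=
  is_tiling T /\
  forall eps, 0 < eps -> exists x a b, Rabs a < eps /\ Rabs b < eps /\
    agree_on (ptr T a) (ptr (ptr T0 x) b) (/ eps).

Definition union_shifts (P : seq tile) (v : R) (n : nat) : tset :=
  fun T => exists k : nat, (1 <= k <= n)%nat /\
    exists T', List.In T' P /\ T = tr T' (INR k * v).

(* The tiles are intervals and the vector l of prototile lengths is a left
   eigenvector of the substitution matrix M for the inflation factor lam.  As
   the characteristic polynomial of M is irreducible, the lengths are linearly
   independent over Q, so the distance between two left endpoints of tiles of
   T0 has a unique rational count vector.  Suppose T0 had arbitrarily long
   progressions p + k v of left endpoints and let c be the count vector of v.
   By repetitivity the inflated tile lam^k T_j fits inside such a progression,
   so M^k e_j = A_k c + d_k with d_k bounded and A_k unbounded.  Applying M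
   once more and eliminating A_(k+1), the 2x2 minors of (c, M c) are
   O(1/A_k), hence zero: c is a rational eigenvector of M, impossible for an
   irreducible characteristic polynomial of degree at least 2.  A tiling in
   the hull containing all T + k v, or a legal patch P all of whose unions of
   translates P + k v are legal, would produce such progressions. *)

From Stdlib Require Import Reals Rtopology List Lra Lia ZArith Classical FunctionalExtensionality.
From mathcomp Require Import all_boot all_algebra.
From mathcomp Require Import Rstruct zify.
From mathcomp Require ring lra.

Set Implicit Arguments.
Unset Strict Implicit.
Unset Printing Implicit Defensive.
Import GRing.Theory Num.Theory.
Local Open Scope R_scope.

Lemma tr0 t : tr t 0 = t.
Proof.
case: t => s k; rewrite /tr /=; congr Tile.
by apply: functional_extensionality => y; rewrite Rminus_0_r.
Qed.

Lemma tr_tr t x y : tr (tr t x) y = tr t (x + y).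
Proof.
rewrite /tr /=; congr Tile; apply: functional_extensionality => z.
by f_equal; ring.
Qed.

Lemma tr_trN t x : tr (tr t x) (- x) = t.
Proof. by rewrite tr_tr Rplus_opp_r tr0. Qed.

Definition ivl_tile (t : tile) (u w : R) : Prop :=
  0 < w /\ forall y, tsupp t y <-> u <= y <= u + w.

Lemma ivl_tile_uniq t u w u' w' : ivl_tile t u w -> ivl_tile t u' w' -> u = u' /\ w = w'.
Proof.
move=> [Hw H] [Hw' H'].
have := proj1 (H' u) (proj2 (H u) ltac:(lra)).
have := proj1 (H u') (proj2 (H' u') ltac:(lra)).
have := proj1 (H' (u + w)) (proj2 (H (u + w)) ltac:(lra)).
have := proj1 (H (u' + w')) (proj2 (H' (u' + w')) ltac:(lra)).
lra.
Qed.

Lemma ivl_tile_tr t u w x : ivl_tile t u w -> ivl_tile (tr t x) (u + x) w.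
Proof. by move=> [Hw H]; split => // y /=; rewrite H; lra. Qed.

Lemma ivl_tile_interior t u w z : ivl_tile t u w -> u < z < u + w -> interior (tsupp t) z.
Proof.
move=> [_ H] Hz.
have hd : 0 < Rmin (z - u) (u + w - z) by apply: Rmin_pos; lra.
exists (mkposreal _ hd) => y /Rabs_def2 /= [? ?]; apply/H.
have := Rmin_l (z - u) (u + w - z); have := Rmin_r (z - u) (u + w - z); lra.
Qed.

Section IntervalPatch.
Variable P : tset.
Hypothesis HP : is_patch P.

Lemma patch_ivl_disjoint t1 t2 u1 w1 u2 w2 : P t1 -> P t2 -> t1 <> t2 ->
  ivl_tile t1 u1 w1 -> ivl_tile t2 u2 w2 -> u1 + w1 <= u2 \/ u2 + w2 <= u1.
Proof.
move=> P1 P2 ne I1 I2; apply: NNPP => Hov.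
have [w1_gt0 _] := I1; have [w2_gt0 _] := I2.
set lo := Rmax u1 u2; set hi := Rmin (u1 + w1) (u2 + w2).
have lo_hi : lo < hi by apply: Rmax_lub_lt; apply: Rmin_glb_lt; lra.
have := Rmax_l u1 u2; have := Rmax_r u1 u2.
have := Rmin_l (u1 + w1) (u2 + w2); have := Rmin_r (u1 + w1) (u2 + w2).
rewrite -/lo -/hi => hi2 hi1 lo2 lo1.
apply: (proj2 HP _ _ P1 P2 ne ((lo + hi) / 2)); split.
- by apply: (ivl_tile_interior I1); lra.
- by apply: (ivl_tile_interior I2); lra.
Qed.

Lemma patch_ivl_overlap t1 t2 u1 w1 u2 w2 : P t1 -> P t2 ->
  ivl_tile t1 u1 w1 -> ivl_tile t2 u2 w2 -> u1 < u2 + w2 -> u2 < u1 + w1 ->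
  u1 = u2 /\ w1 = w2.
Proof.
move=> P1 P2 I1 I2 h1 h2; case: (classic (t1 = t2)) => [e|ne].
  by subst; apply: ivl_tile_uniq I1 I2.
by have := patch_ivl_disjoint P1 P2 ne I1 I2; lra.
Qed.

End IntervalPatch.

Section IntervalUnion.
Variables (X : Type) (lo w : X -> R).

Definition covers (L : list X) (z : R) : Prop :=
  exists x, In x L /\ lo x <= z <= lo x + w x.

Lemma covers_left_limit L A c : A < c ->
  (forall z, A <= z < c -> covers L z) -> covers L c.
Proof.
elim: L A => [|x L IH] A hAc Hcov; first by have [y [[]]] := Hcov A ltac:(lra).
case: (classic (lo x <= c <= lo x + w x)) => [hx|hx]; first by exists x; split => //; left.
have [A' [hA' Hout]] : exists A', A <= A' < c /\
    forall z, A' <= z < c -> ~ (lo x <= z <= lo x + w x).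
  case: (Rlt_le_dec c (lo x)) => h; first by exists A; split => [|z]; lra.
  set b := (lo x + w x + c) / 2.
  have hb : Rmax A b < c by apply: Rmax_lub_lt; rewrite /b; lra.
  exists (Rmax A b); split => [|z]; first by have := Rmax_l A b; lra.
  by have := Rmax_r A b; rewrite /b; lra.
have [y [Hy hy]] : covers L c.
  apply: (IH A') => [|z hz]; first lra.
  have [y [[<-|Hy] hy]] := Hcov z ltac:(lra); first by case: (Hout z hz).
  by exists y.
by exists y; split => //; right.
Qed.

Lemma ivl_partition_length (L : list X) A B :
  NoDup L -> (forall x, In x L -> 0 < w x) ->
  (forall x y, In x L -> In y L -> x <> y -> lo x + w x <= lo y \/ lo y + w y <= lo x) ->
  (forall z, covers L z <-> A <= z <= B) -> A <= B ->
  B - A = (\sum_(x <- L) w x)%R.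
Proof.
have [n] := ubnP (size L); elim: n => // n IH in L A B * => HL Hnd Hw Hdis Hcov hAB.
have [x [HxL hx]] := proj2 (Hcov B) ltac:(lra).
have Hin y : In y L -> A <= lo y /\ lo y + w y <= B.
  move=> Hy; have := Hw y Hy => hy.
  have c1 : covers L (lo y) by exists y; split => //; lra.
  have c2 : covers L (lo y + w y) by exists y; split => //; lra.
  by have := proj1 (Hcov _) c1; have := proj1 (Hcov _) c2; lra.
have [L1 [L2 EL]] := in_split x L HxL; subst L.
set L' := L1 ++ L2.
have HL' y : In y L' -> In y (L1 ++ x :: L2).
  by rewrite !in_app_iff /=; tauto.
have Hleft y : In y L' -> A <= lo y /\ lo y + w y <= lo x.
  move=> Hy; have hxy : x <> y by move=> e; subst y; exact: NoDup_remove_2 Hnd Hy.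
  have := Hdis x y HxL (HL' y Hy) hxy; have := Hw y (HL' y Hy).
  have := Hin y (HL' y Hy); have := Hin x HxL; lra.
have -> : (\sum_(y <- L1 ++ x :: L2) w y = w x + \sum_(y <- L') w y)%R.
  by rewrite !big_cat big_cons /= addrCA.
have [hxA|hxA] := Rle_lt_or_eq_dec _ _ (proj1 (Hin x HxL)); last first.
  case E: L' => [|y L'']; first by rewrite big_nil addr0; have := Hin x HxL; lra.
  have Hy : In y L' by rewrite E; left.
  by have := Hleft y Hy; have := Hw y (HL' y Hy); lra.
have Hcov' z : A <= z < lo x -> covers L' z.
  move=> hz; have [y [Hy hy]] := proj2 (Hcov z) ltac:(have := Hin x HxL; lra).
  move: Hy; rewrite in_app_iff /= => [[Hy|[e|Hy]]].
  - by exists y; split => //; rewrite in_app_iff; left.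
  - by subst y; lra.
  - by exists y; split => //; rewrite in_app_iff; right.
rewrite -RplusE -(IH L' A (lo x)); first (have := Hin x HxL; lra).
- by move: HL; rewrite /L' !size_cat /=; lia.
- exact: NoDup_remove_1 Hnd.
- by move=> y Hy; apply: Hw; apply: HL'.
- by move=> y y' Hy Hy'; apply: Hdis; apply: HL'.
- move=> z; split; last first.
    case=> h1 /Rle_lt_or_eq_dec [h2|->]; first exact: Hcov'.
    by apply: covers_left_limit hxA _ => z' hz'; apply: Hcov'.
  by move=> [y [Hy hy]]; have := Hleft y Hy; lra.
- lra.
Qed.
End IntervalUnion.

Lemma map_ListE (A B : Type) (f : A -> B) (s : seq A) : map f s = List.map f s.
Proof. by elim: s => //= x s ->. Qed.

Lemma NoDup_map_inj_in (A B : Type) (f : A -> B) (L : list A) x y :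
  NoDup (List.map f L) -> In x L -> In y L -> f x = f y -> x = y.
Proof.
elim: L => [|z L IH] //= /NoDup_cons_iff [nz nd] [ex|hx] [ey|hy] e; subst => //.
- by case: nz; rewrite e; apply: in_map.
- by case: nz; rewrite -e; apply: in_map.
- exact: IH.
Qed.

Lemma big_seq_count (X : Type) (V : nmodType) (k : nat) (f : X -> 'I_k) (F : 'I_k -> V)
    (s : seq X) :
  (\sum_(x <- s) F (f x) = \sum_i F i *+ count (fun x => f x == i) s)%R.
Proof.
elim: s => [|x s IH]; first by rewrite big_nil big1.
rewrite big_cons IH /=; under [RHS]eq_bigr => i _ do rewrite mulrnDr.
rewrite big_split /=; congr (_ + _)%R.
by rewrite (bigD1 (f x)) //= eqxx big1 ?addr0 // => i /negbTE hi; rewrite eq_sym hi.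
Qed.

Lemma pow_unbounded x : 1 < x -> forall X, exists k, X <= x ^ k.
Proof.
move=> hx X; have [k hk] := Pow_x_infinity x ltac:(rewrite Rabs_pos_eq; lra) X.
exists k; have := hk k (le_n k); rewrite Rabs_pos_eq; first lra.
by apply: pow_le; lra.
Qed.

Lemma nat_floor_mul y v : 0 < v -> 0 <= y ->
  exists k : nat, INR k * v <= y < (INR k + 1) * v.
Proof.
move=> hv hy; have [h1 h2] := base_Int_part (y / v).
have hyv : 0 <= y / v by apply: Rmult_le_pos hy _; apply/Rlt_le/Rinv_0_lt_compat.
have h0 : Z.le 0 (Int_part (y / v)).
  suff : Z.lt (-1) (Int_part (y / v)) by lia.
  by apply: lt_IZR; lra.
exists (Z.to_nat (Int_part (y / v))); rewrite INR_IZR_INZ Z2Nat.id //.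
have e : y = y / v * v by field; lra.
by split; nra.
Qed.

Lemma fin_pos_lower_bound (I : finType) (f : I -> R) :
  (forall i, 0 < f i) -> exists mu, 0 < mu /\ forall i, mu <= f i.
Proof.
move=> f_gt0; suff [mu [mu0 H]] : exists mu, 0 < mu /\ forall i, i \in enum I -> mu <= f i.
  by exists mu; split => // i; apply: H; rewrite mem_enum.
elim: (enum I) => [|i s [mu [mu0 H]]]; first by exists 1; split => //; lra.
exists (Rmin (f i) mu); split; first exact: Rmin_pos.
move=> j; rewrite in_cons => /orP [/eqP ->|js]; first exact: Rmin_l.
exact: Rle_trans (Rmin_r _ _) (H j js).
Qed.

Section TotalLength.
Local Open Scope ring_scope.
Variables (m : nat) (l : 'I_m -> R).

Definition total_length (c : 'cV[rat]_m) : R := \sum_i l i * ratr (c i ord0).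

Lemma total_length0 : total_length 0 = 0.
Proof. by rewrite /total_length big1 // => i _; rewrite mxE rmorph0 mulr0. Qed.

Lemma total_lengthD c1 c2 : total_length (c1 + c2) = total_length c1 + total_length c2.
Proof.
by rewrite /total_length -big_split; apply: eq_bigr => i _; rewrite mxE rmorphD mulrDr.
Qed.

Lemma total_lengthZ k c : total_length (k *: c) = ratr k * total_length c.
Proof.
by rewrite /total_length mulr_sumr; apply: eq_bigr => i _; rewrite mxE rmorphM mulrCA.
Qed.

Lemma total_lengthB c1 c2 : total_length (c1 - c2) = total_length c1 - total_length c2.
Proof. by rewrite total_lengthD -scaleN1r total_lengthZ rmorphN1 mulN1r. Qed.

Lemma total_length_sum (I : Type) (r : seq I) (F : I -> 'cV[rat]_m) :
  total_length (\sum_(k <- r) F k) = \sum_(k <- r) total_length (F k).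
Proof.
elim: r => [|k r IH]; first by rewrite !big_nil total_length0.
by rewrite !big_cons total_lengthD IH.
Qed.

Lemma total_length_delta j : total_length (delta_mx j ord0) = l j.
Proof.
rewrite /total_length (bigD1 j) //= big1 ?addr0; first by rewrite mxE !eqxx rmorph1 mulr1.
by move=> i /negbTE hi; rewrite mxE hi rmorph0 mulr0.
Qed.

End TotalLength.

Definition nonneg_col (k : nat) (c : 'cV[rat]_k) := forall i, (0 <= c i ord0)%R.

Section NonnegLength.
Variables (k : nat) (l : 'I_k -> R) (mu : R).
Hypothesis mu_gt0 : 0 < mu.
Hypothesis mu_le : forall i, mu <= l i.
Variable c : 'cV[rat]_k.
Hypothesis c_ge0 : nonneg_col c.

Let term_ge0 i : (0 <= l i * ratr (c i ord0))%R.
Proof.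
apply: mulr_ge0; last by rewrite ler0q.
by apply/RleP; rewrite -R0E; have := mu_le i; lra.
Qed.

Lemma total_length_ge0 : 0 <= total_length l c.
Proof. by apply/RleP/sumr_ge0 => i _. Qed.

Lemma total_length_entry_lt (K : nat) : total_length l c < INR K * mu ->
  forall i, (c i ord0 < K%:R)%R.
Proof.
move=> hc i; rewrite -(ltr_rat R) ratr_nat -INRE; apply/RltP/Rnot_le_lt => hK.
have : l i * ratr (c i ord0) <= total_length l c.
  by rewrite /total_length (bigD1 i) //=; apply/RleP; rewrite lerDl sumr_ge0.
move: hK; set x := ratr (c i ord0) => hK hx.
have := mu_le i; have := pos_INR K; nra.
Qed.

End NonnegLength.

Section IrreducibleCharPoly.
Local Open Scope ring_scope.
Variables (n : nat) (M : 'M[rat]_n.+1).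
Hypothesis irrM : irreducible_poly (char_poly M).

Lemma annihilated_col_eq0 (p : {poly rat}) (w : 'cV_n.+1) :
  p != 0 -> (size p <= n.+1)%N -> horner_mx M p *m w = 0 -> w = 0.
Proof.
move=> p0 sp pw.
have : coprimep (char_poly M) p.
  rewrite irreducible_poly_coprime //; apply/negP => /(dvdp_leq p0).
  by rewrite size_char_poly leqNgt ltnS sp.
move=> /Bezout_eq1_coprimepP [[u v] /= uv].
have := congr1 (horner_mx M) uv.
rewrite rmorphD !rmorphM /= Cayley_Hamilton mulr0 add0r rmorph1.
move=> vp; have -> : w = (horner_mx M v * horner_mx M p) *m w by rewrite vp mul1mx.
by rewrite -mulmxE -mulmxA pw mulmx0.
Qed.

Lemma no_rat_eigenvector (c : 'cV_n.+1) rho : (0 < n)%N -> M *m c = rho *: c -> c = 0.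
Proof.
move=> n_gt0 Mc; apply: (@annihilated_col_eq0 ('X - rho%:P)).
- by rewrite polyXsubC_eq0.
- by rewrite size_XsubC.
by rewrite rmorphB /= horner_mx_X horner_mx_C mulmxBl Mc mul_scalar_mx subrr.
Qed.

Lemma krylov_span (w : 'cV_n.+1) i : w != 0 ->
  exists coef : 'I_n.+1 -> rat, delta_mx i ord0 = \sum_k coef k *: (M ^+ k *m w).
Proof.
move=> w0; pose K : 'M[rat]_n.+1 := \matrix_(k, j) (M ^+ k *m w) j ord0.
have : row_free K.
  rewrite -kermx_eq0; apply: contraT => /matrix0Pn [r [j kerrj]].
  pose y := row r (kermx K).
  have yK : y *m K = 0 by apply/sub_kermxP; exact: row_sub.
  pose p : {poly rat} := \poly_(k < n.+1) y ord0 (inord k).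
  have p0 : p != 0.
    apply: contraNneq kerrj => /(congr1 (fun q : {poly rat} => q`_j)).
    by rewrite coef_poly ltn_ord inord_val coef0 mxE => ->.
  suff /eqP : w = 0 by rewrite (negbTE w0).
  apply: (annihilated_col_eq0 p0 (size_poly _ _)).
  apply/matrixP => j' k'; rewrite (ord1 k') [RHS]mxE.
  transitivity ((y *m K) ord0 j'); last by rewrite yK mxE.
  rewrite /p poly_def rmorph_sum /= mulmx_suml summxE !mxE; apply: eq_bigr => k _.
  by rewrite inord_val linearZ /= rmorphXn /= horner_mx_X -scalemxAl !mxE.
rewrite row_free_unit => Kunit; exists (fun k => invmx K i k).
apply/matrixP => i' j'; rewrite (ord1 j') summxE mxE.
have := congr1 (fun A : 'M[rat]_n.+1 => A i i') (mulVmx Kunit).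
by rewrite !mxE eqxx andbT eq_sym => <-; apply: eq_bigr => k _; rewrite !mxE.
Qed.

End IrreducibleCharPoly.

Section LengthEigenvector.
Local Open Scope ring_scope.
Variables (n : nat) (M : 'M[rat]_n.+1) (l : 'I_n.+1 -> R) (lam : R).
Hypothesis lM : forall j, \sum_i l i * ratr (M i j) = lam * l j.

Lemma total_length_mulmx c : total_length l (M *m c) = lam * total_length l c.
Proof.
rewrite /total_length; under eq_bigr => i _ do rewrite mxE rmorph_sum mulr_sumr.
rewrite exchange_big mulr_sumr; apply: eq_bigr => j _ /=.
by rewrite mulrA -lM mulr_suml; apply: eq_bigr => i _; rewrite rmorphM mulrA.
Qed.

Lemma total_length_exp k c : total_length l (M ^+ k *m c) = lam ^+ k * total_length l c.
Proof.
elim: k => [|k IH]; first by rewrite expr0 mul1mx mul1r.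
by rewrite exprS -mulmxE -mulmxA total_length_mulmx IH mulrA -exprS.
Qed.

Lemma total_length_eq0 c : irreducible_poly (char_poly M) -> (forall i, l i != 0) ->
  total_length l c = 0 -> c = 0.
Proof.
move=> irrM l0 c0; apply/eqP; apply: contraT => cn0.
have [coef e] := krylov_span irrM ord0 cn0.
move: (l0 ord0); rewrite -total_length_delta e total_length_sum big1 ?eqxx // => k _.
by rewrite total_lengthZ total_length_exp c0 !mulr0.
Qed.

End LengthEigenvector.

Section BoundedOrbit.
(* Imported locally: these [lra] and [ring] shadow the Stdlib tactics used on R. *)
Import order.Order.TTheory mathcomp.algebra_tactics.ring mathcomp.algebra_tactics.lra.
Local Open Scope ring_scope.
Variable m : nat.

Definition bounded_by (K : rat) (d : 'cV[rat]_m) := forall i, `|d i ord0| <= K.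

Lemma bounded_by_sub (K : rat) (d1 d2 : 'cV[rat]_m) :
  (forall i, 0 <= d1 i ord0 < K) -> (forall i, 0 <= d2 i ord0 < K) -> bounded_by K (d2 - d1).
Proof.
move=> h1 h2 i; have /andP [? ?] := h1 i; have /andP [? ?] := h2 i.
by rewrite !mxE ler_norml; apply/andP; split; lra.
Qed.

Lemma mulmx_bounded (M : 'M[rat]_m) K d :
  bounded_by K d -> bounded_by (K * \sum_r \sum_s `|M r s|) (M *m d).
Proof.
move=> Hd r; have K0 : 0 <= K by apply: le_trans (Hd r); rewrite normr_ge0.
rewrite mxE; apply: le_trans (ler_norm_sum _ _ _) _.
apply: (@le_trans _ _ (K * \sum_s `|M r s|)).
  rewrite mulr_sumr; apply: ler_sum => s _; rewrite normrM mulrC.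
  by apply: ler_wpM2r => //; apply: Hd.
apply: ler_wpM2l => //; rewrite [X in _ <= X](bigD1 r) //= lerDl.
by apply: sumr_ge0 => r' _; apply: sumr_ge0 => s _.
Qed.

Lemma wedge_bound (u c d d' : 'cV[rat]_m) (A : nat) (A' K K' : rat) i i0 :
  A%:R *: u + d = A' *: c + d' -> bounded_by K d -> bounded_by K' d' ->
  A%:R * `|c i0 ord0 * u i ord0 - c i ord0 * u i0 ord0|
    <= (`|c i0 ord0| + `|c i ord0|) * (K + K').
Proof.
move=> e Hd Hd'.
have := congr1 (fun X : 'cV[rat]_m => X i ord0) e.
have := congr1 (fun X : 'cV[rat]_m => X i0 ord0) e.
rewrite /= !mxE => e0 e1.
have -> : A%:R * `|c i0 ord0 * u i ord0 - c i ord0 * u i0 ord0|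
    = `|c i0 ord0 * (d' i ord0 - d i ord0) - c i ord0 * (d' i0 ord0 - d i0 ord0)|.
  rewrite -[A%:R]normr_nat -normrM; congr `|_|.
  have -> : d' i ord0 = A%:R * u i ord0 + d i ord0 - A' * c i ord0 by rewrite e1; ring.
  have -> : d' i0 ord0 = A%:R * u i0 ord0 + d i0 ord0 - A' * c i0 ord0 by rewrite e0; ring.
  ring.
apply: le_trans (ler_normB _ _) _; rewrite !normrM mulrDl.
have b r : `|d' r ord0 - d r ord0| <= K + K'.
  by apply: le_trans (ler_normB _ _) _; rewrite addrC lerD.
by apply: lerD; apply: ler_wpM2l.
Qed.

Lemma unbounded_mul_eq0 (x B : rat) :
  (forall N : nat, exists A : nat, (N <= A)%N /\ A%:R * `|x| <= B) -> x = 0.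
Proof.
move=> H; apply/eqP; apply: contraT => x0; have x0' : 0 < `|x| by rewrite normr_gt0.
have [B0|B0] := ltP B 0.
  have [A [_ AB]] := H 0%N; have : 0 <= A%:R * `|x| by rewrite mulr_ge0.
  by rewrite leNgt (le_lt_trans AB B0).
have [A [NA AB]] := H (Num.bound (B / `|x|)).
have := archi_boundP (divr_ge0 B0 (ltW x0')); rewrite ltr_pdivrMr //.
move/lt_le_trans => /(_ (A%:R * `|x|)); rewrite ler_wpM2r ?ler_nat // ?ltW //.
by move=> /(_ isT); rewrite ltNge AB.
Qed.

Lemma proportional_colE (u c : 'cV[rat]_m) i0 : c i0 ord0 != 0 ->
  (forall i, c i0 ord0 * u i ord0 = c i ord0 * u i0 ord0) ->
  u = (u i0 ord0 / c i0 ord0) *: c.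
Proof.
move=> c0 H; apply/matrixP => i j; rewrite (ord1 j) mxE.
by apply: (mulfI c0); rewrite H; field.
Qed.

Lemma bounded_orbit_eigenvector (M : 'M[rat]_m) (x c : 'cV[rat]_m) (K : rat) :
  (forall N : nat, exists (k A : nat) (A' : rat) (d d' : 'cV[rat]_m),
     (N <= A)%N /\ bounded_by K d /\ bounded_by K d' /\
     M ^+ k *m x = A%:R *: c + d /\ M ^+ k.+1 *m x = A' *: c + d') ->
  exists rho, M *m c = rho *: c.
Proof.
move=> H; have [->|/matrix0Pn [i0 [j0 c0]]] := eqVneq c 0.
  by exists 0; rewrite mulmx0 scaler0.
rewrite (ord1 j0) in c0; exists ((M *m c) i0 ord0 / c i0 ord0).
apply: proportional_colE => // i; apply: subr0_eq.
pose S := \sum_r \sum_s `|M r s|.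
apply: (@unbounded_mul_eq0 _ ((`|c i0 ord0| + `|c i ord0|) * (K * S + K))) => N.
have [k [A [A' [d [d' [NA [Hd [Hd' [e e']]]]]]]]] := H N.
have e2 : A%:R *: (M *m c) + M *m d = A' *: c + d'.
  by rewrite -e' exprS -mulmxE -mulmxA e mulmxDr scalemxAr.
by exists A; split => //; apply: wedge_bound e2 (mulmx_bounded M Hd) Hd'.
Qed.

End BoundedOrbit.

Section FixedPoint.
Variable n : nat.
Local Notation m := n.+1.
Variables (proto : 'I_m -> tile) (lam : R) (om : 'I_m -> seq ('I_m * R)).
Variables (T0 : tset) (a l : 'I_m -> R) (mu : R).
Hypothesis rule : is_subst_rule proto lam om.
Hypothesis fixT0 : fixed_point proto lam om T0.
Hypothesis proto_ivl : forall j, ivl_tile (proto j) (a j) (l j).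
Hypothesis mu_gt0 : 0 < mu.
Hypothesis mu_le : forall j, mu <= l j.

Let start (p : 'I_m * R) := a p.1 + p.2.
Let len (p : 'I_m * R) := l p.1.

Lemma T0_patch : is_patch T0.
Proof. by case: fixT0 => [[]]. Qed.

Lemma T0_cover y : exists t, T0 t /\ tsupp t y.
Proof. by case: fixT0 => [[_ H] _]. Qed.

Lemma T0_ivl t : T0 t -> exists j x, t = tr (proto j) x /\ ivl_tile t (a j + x) (l j).
Proof.
move=> Ht; have [_ [H _]] := fixT0; have [j [x ->]] := H t Ht.
by exists j, x; split => //; apply: ivl_tile_tr.
Qed.

Lemma T0_length t u w : T0 t -> ivl_tile t u w -> mu <= w.
Proof.
move=> /T0_ivl [j [x [_ It]]] Iuw.
by have [_ ->] := ivl_tile_uniq Iuw It; apply: mu_le.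
Qed.

Definition left_end (s : R) := exists t w, T0 t /\ ivl_tile t s w.

Lemma T0_start_after_end t s w t' u w' : T0 t -> ivl_tile t s w ->
  T0 t' -> ivl_tile t' u w' -> s + w < u + w' -> s + w <= u.
Proof.
move=> Ht It Ht' It' h; apply: Rnot_lt_le => hu.
by have [] := patch_ivl_overlap T0_patch Ht Ht' It It' ltac:(case: It; lra) hu; lra.
Qed.

Lemma left_end_next t s w : T0 t -> ivl_tile t s w -> left_end (s + w).
Proof.
(* The tile B covering s + w + mu/2 starts at s + w: a gap before B would be
   covered by a tile overlapping B, as all tiles have length at least mu. *)
move=> Ht It; have hw := T0_length Ht It.
have [B [HB HBy]] := T0_cover (s + w + mu / 2).
have [j [x [_ IB]]] := T0_ivl HB; set u := a j + x in IB.
have hB := proj1 (proj2 IB _) HBy; have hlj := mu_le j.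
have hu : s + w <= u by apply: T0_start_after_end Ht It HB IB _; lra.
have [->|hu'] := Req_dec (s + w) u; first by exists B, (l j).
have [C [HC HCy]] := T0_cover ((s + w + u) / 2).
have [j' [x' [_ IC]]] := T0_ivl HC; set u' := a j' + x' in IC.
have hC := proj1 (proj2 IC _) HCy; have hlj' := mu_le j'.
have hu'' : s + w <= u' by apply: T0_start_after_end Ht It HC IC _; lra.
by have [] := patch_ivl_overlap T0_patch HB HC IB IC ltac:(lra) ltac:(lra); lra.
Qed.

Lemma left_end_step s t : left_end s -> left_end t -> s < t ->
  exists j, left_end (s + l j) /\ s + l j <= t.
Proof.
move=> [t1 [w1 [H1 I1]]] [t2 [w2 [H2 I2]]] hst.
have [j [x [_ I1']]] := T0_ivl H1; have [es ew] := ivl_tile_uniq I1 I1'.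
exists j; rewrite -ew; split; first exact: left_end_next I1.
apply: Rnot_lt_le => h.
by have [] := patch_ivl_overlap T0_patch H1 H2 I1 I2 ltac:(case: I2; lra) h; lra.
Qed.

Lemma subst_covers j z :
  covers start len (om j) z <-> lam * a j <= z <= lam * a j + lam * l j.
Proof.
have [lam1 [_ [_ [_ [_ Hsupp]]]]] := rule; have [lj Hj] := proto_ivl j.
have Hin p : In p (om j) -> In (tr (proto p.1) p.2) (subst_patch proto om j).
  by move=> Hp; rewrite /subst_patch map_ListE; apply: in_map.
split.
  move=> [p [Hp hz]].
  have [z' [/Hj hz' ->]] := proj1 (Hsupp j z)
    (ex_intro _ _ (conj (Hin p Hp) (proj2 (proj2 (ivl_tile_tr p.2 (proto_ivl p.1)) z) hz))).
  nra.
move=> hz; have ez : z = lam * (z / lam) by field; lra.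
have hz' : tsupp (proto j) (z / lam).
  apply/Hj; split; apply: (Rmult_le_reg_l lam); rewrite -?ez; lra.
have [T [HT HTz]] := proj2 (Hsupp j z) (ex_intro _ _ (conj hz' ez)).
move: HT; rewrite /subst_patch map_ListE => /in_map_iff [p [eT Hp]].
exists p; split => //; apply/(proj2 (ivl_tile_tr p.2 (proto_ivl p.1))).
by rewrite eT.
Qed.

Lemma left_end_diff s t : left_end s -> left_end t -> s <= t ->
  exists c, nonneg_col c /\ t - s = total_length l c.
Proof.
move=> Es Et hst; have [k hk] := INR_archimed mu (t - s) mu_gt0.
elim: k s Es hst hk => [|k IH] s Es hst hk; first by rewrite /= in hk; lra.
have [h|<-] := Rle_lt_or_eq_dec _ _ hst; last first.
  by exists 0%R; split => [i|]; rewrite ?mxE ?total_length0 ?Rminus_diag.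
have [j [Ej hj]] := left_end_step Es Et h.
have [c [c_ge0 e]] := IH _ Ej hj ltac:(rewrite S_INR in hk; have := mu_le j; lra).
exists (c + delta_mx j ord0)%R; split.
  by move=> i; rewrite !mxE addr_ge0 // ler0n.
by rewrite total_lengthD total_length_delta -e -RplusE; lra.
Qed.

Lemma left_end_lam s : left_end s -> left_end (lam * s).
Proof.
move=> [t [w [Ht It]]]; have [i [x [et It']]] := T0_ivl Ht.
have [-> _] := ivl_tile_uniq It It'; have [lam1 _] := rule; have [li _] := proto_ivl i.
have [p [Hp hp]] := proj2 (subst_covers i (lam * a i)) ltac:(nra).
have /(subst_covers i) hp' : covers start len (om i) (start p).
  by exists p; split => //; rewrite /start /len; have := mu_le p.1; lra.
exists (tr (tr (proto p.1) p.2) (lam * x)), (l p.1); split.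
  by apply/(proj2 (proj2 fixT0)); exists i, x; split; [rewrite -et | exists p].
have -> : lam * (a i + x) = a p.1 + p.2 + lam * x by rewrite /start /len in hp hp'; nra.
exact: ivl_tile_tr (ivl_tile_tr _ (proto_ivl p.1)).
Qed.

Lemma left_end_pow k s : left_end s -> left_end (lam ^ k * s).
Proof.
elim: k s => [|k IH] s Es /=; first by rewrite Rmult_1_l.
by rewrite Rmult_assoc; apply: left_end_lam; apply: IH.
Qed.

Lemma subst_length j : (\sum_(p <- om j) l p.1)%R = lam * l j.
Proof.
have [lam1 [_ [_ [Hnd [Hpat _]]]]] := rule; have [lj _] := proto_ivl j.
have Hnd' := Hnd j; rewrite /subst_patch map_ListE in Hnd'.
have -> : lam * l j = lam * a j + lam * l j - lam * a j by ring.
symmetry; apply: ivl_partition_length (subst_covers j) _.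
- exact: NoDup_map_inv Hnd'.
- by move=> p _; rewrite /len; have := mu_le p.1; lra.
- move=> p q Hp Hq ne; apply: (patch_ivl_disjoint (Hpat j)) (ivl_tile_tr _ (proto_ivl p.1))
    (ivl_tile_tr _ (proto_ivl q.1)).
  + by rewrite /of_list /subst_patch map_ListE; apply: in_map.
  + by rewrite /of_list /subst_patch map_ListE; apply: in_map.
  + by move=> e; apply: ne; apply: NoDup_map_inj_in Hnd' Hp Hq e.
- nra.
Qed.

Lemma lengths_left_eigen j : (\sum_i l i * ratr (subst_mx om i j))%R = lam * l j.
Proof.
rewrite -subst_length (big_seq_count (fun p : 'I_m * R => p.1)).
by apply: eq_bigr => i _; rewrite mxE ratr_nat mulr_natr.
Qed.

Definition progression (N : nat) (p v : R) :=
  forall k, (1 <= k <= N)%N -> left_end (p + INR k * v).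

Lemma progression_decomp N p v z : 0 < v -> progression N p v -> left_end z ->
  p + v <= z <= p + INR N * v ->
  exists (A : nat) d, nonneg_col d /\ z = p + INR A * v + total_length l d /\
    total_length l d < v.
Proof.
move=> hv Hp Ez hz; have [A [hA1 hA2]] := nat_floor_mul (y := z - p) hv ltac:(lra).
have hA : (1 <= A <= N)%N.
  apply/andP; split; first by case: A hA1 hA2 => [|A] //=; lra.
  by apply/leP/INR_le; nra.
have [d [d_ge0 e]] := left_end_diff (Hp A hA) Ez ltac:(lra).
by exists A, d; split => //; lra.
Qed.

Hypothesis repT0 : repetitive T0.

Lemma left_end_diff_bounded v (K : nat) s1 s2 : 0 < v -> v <= INR K * mu ->
  (forall N, exists p, progression N p v) -> left_end s1 -> left_end s2 -> s1 <= s2 ->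
  exists (A : nat) d, bounded_by K%:R d /\
    s2 - s1 = INR A * v + total_length l d /\ s2 - s1 < (INR A + 1) * v.
Proof.
move=> hv hK Hprog [t1 [w1 [Ht1 I1]]] [t2 [w2 [Ht2 I2]]] hs.
have [L [hL HL]] := @repT0 [:: t1; t2] ltac:(by move=> T [<-|[<-|[]]]).
have [N hN] := INR_archimed v (L + v) hv; have [p Hp] := Hprog N.
(* Repetitivity moves both tiles into the window [p + v, p + N v] of the progression. *)
have [x [Hx1 Hx2]] := HL (p + v).
have E1 : left_end (s1 + x).
  by exists (tr t1 x), w1; split; [apply: Hx1; left | apply: ivl_tile_tr].
have E2 : left_end (s2 + x).
  by exists (tr t2 x), w2; split; [apply: Hx1; right; left | apply: ivl_tile_tr].
have b1 : p + v <= s1 + x <= p + v + L.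
  by apply: (Hx2 t1); [left | apply/(proj2 (ivl_tile_tr x I1)); case: I1; lra].
have b2 : p + v <= s2 + x <= p + v + L.
  by apply: (Hx2 t2); [right; left | apply/(proj2 (ivl_tile_tr x I2)); case: I2; lra].
have [A1 [d1 [d1_ge0 [e1 h1]]]] := progression_decomp hv Hp E1 ltac:(lra).
have [A2 [d2 [d2_ge0 [e2 h2]]]] := progression_decomp hv Hp E2 ltac:(lra).
have g1 := total_length_ge0 mu_gt0 mu_le d1_ge0.
have g2 := total_length_ge0 mu_gt0 mu_le d2_ge0.
have hA : (A1 <= A2)%N.
  rewrite leqNgt; apply/negP => /leP/le_INR; rewrite S_INR; nra.
exists (A2 - A1)%N, (d2 - d1)%R; rewrite minus_INR; last exact/leP.
split; last by rewrite total_lengthB -RminusE; lra.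
have lt_K c : nonneg_col c -> total_length l c < v -> forall i, (0 <= c i ord0 < K%:R)%R.
  move=> c_ge0 hc i; rewrite c_ge0 /=.
  by apply: (total_length_entry_lt mu_gt0 mu_le c_ge0); lra.
exact: bounded_by_sub (lt_K _ d1_ge0 h1) (lt_K _ d2_ge0 h2).
Qed.

Let l_neq0 i : (l i != 0)%R.
Proof. by apply/eqP; rewrite -R0E; have := mu_le i; lra. Qed.

Hypothesis irrM : irreducible_mx (subst_mx om).

Lemma subst_mx_pow_decomp v (K : nat) c0 j s0 : 0 < v -> v <= INR K * mu ->
  v = total_length l c0 -> (forall N, exists p, progression N p v) ->
  left_end s0 -> left_end (s0 + l j) ->
  forall k, exists (A : nat) d, bounded_by K%:R d /\
    (subst_mx om ^+ k *m delta_mx j ord0 = A%:R *: c0 + d)%R /\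
    lam ^ k * l j < (INR A + 1) * v.
Proof.
move=> hv hK ev Hprog E0 E1 k.
have hlam : 0 < lam ^ k by apply: pow_lt; case: rule; lra.
have [A [d [Hd [e h]]]] := left_end_diff_bounded hv hK Hprog (left_end_pow k E0)
  (left_end_pow k E1) ltac:(have := mu_le j; nra).
have {}e : lam ^ k * l j = INR A * v + total_length l d by rewrite -e; ring.
exists A, d; split => //; split; last by lra.
(* The lengths are independent over Q, so [e] lifts to an identity of count vectors. *)
apply/subr0_eq/(total_length_eq0 lengths_left_eigen irrM l_neq0)/eqP.
rewrite total_lengthB subr_eq0 total_lengthD total_lengthZ ratr_nat -ev.
by rewrite (total_length_exp lengths_left_eigen) total_length_delta -RpowE -INRE; apply/eqP.
Qed.

Lemma count_vector_eigen v c : 0 < v -> v = total_length l c ->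
  (forall N, exists p, progression N p v) -> exists rho, (subst_mx om *m c = rho *: c)%R.
Proof.
move=> hv ev Hprog; have [K hK] := INR_archimed mu v mu_gt0.
have [t [Ht _]] := T0_cover 0; have [j [x [_ It]]] := T0_ivl Ht.
have E0 : left_end (a j + x) by exists t, (l j).
have E1 := left_end_next Ht It.
have [lam1 _] := rule; have lj := mu_le j.
apply: (bounded_orbit_eigenvector (x := delta_mx j ord0) (K := K%:R)) => N.
have [k hk] := pow_unbounded lam1 ((INR N + 1) * v / l j).
have [A [d [Hd [e h]]]] := subst_mx_pow_decomp hv (Rlt_le _ _ hK) ev Hprog E0 E1 k.
have [A' [d' [Hd' [e' _]]]] := subst_mx_pow_decomp hv (Rlt_le _ _ hK) ev Hprog E0 E1 k.+1.
exists k, A, (A'%:R)%R, d, d'; do !split => //.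
have eX : (INR N + 1) * v = (INR N + 1) * v / l j * l j by field; lra.
have /(Rmult_lt_reg_r _ _ _ hv) : (INR N + 1) * v < (INR A + 1) * v by rewrite eX; nra.
by rewrite -!S_INR => /INR_lt /leP /ltnW.
Qed.

Hypothesis n_gt0 : (0 < n)%N.

Lemma no_long_progression v : 0 < v -> exists N, forall p, ~ progression N p v.
Proof.
move=> hv; apply: NNPP => Hno.
have Hprog N : exists p, progression N p v.
  by apply: NNPP => h; apply: Hno; exists N => p Hp; apply: h; exists p.
have [p Hp] := Hprog 2%N.
have [c [_ ev]] := left_end_diff (Hp 1%N isT) (Hp 2%N isT) ltac:(simpl; lra).
have {}ev : v = total_length l c by rewrite -ev /=; ring.
have [rho Mc] := count_vector_eigen hv ev Hprog.
by move: hv; rewrite ev (no_rat_eigenvector irrM n_gt0 Mc) total_length0 -R0E; lra.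
Qed.

Lemma progression_opp N p v : progression N p v -> progression N (p + INR N.+1 * v) (- v).
Proof.
move=> H k /andP [h1 h2]; have hk : (1 <= N.+1 - k <= N)%N by apply/andP; split; lia.
have := H _ hk; rewrite minus_INR; last by apply/leP; lia.
by congr left_end; ring.
Qed.

Lemma no_long_progression_neq0 v : v <> 0 -> exists N, forall p, ~ progression N p v.
Proof.
move=> hv; have [hv'|hv'] : 0 < v \/ 0 < - v by lra.
  exact: no_long_progression.
have [N HN] := no_long_progression hv'.
by exists N => p /progression_opp; apply: HN.
Qed.

Lemma translates_progression N t v c :
  (forall i, (1 <= i <= N)%N -> T0 (tr t (INR i * v + c))) -> exists p, progression N p v.
Proof.
case: N => [|N] H; first by exists 0 => k /andP [h1 h2]; move: (leq_trans h1 h2).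
have [j [x [_ I1]]] := T0_ivl (H 1%N isT).
have It := ivl_tile_tr (- (INR 1 * v + c)) I1; rewrite tr_trN in It.
exists (a j + x - INR 1 * v) => i hi.
exists (tr t (INR i * v + c)), (l j); split; first exact: H.
by have := ivl_tile_tr (INR i * v + c) It; congr ivl_tile; ring.
Qed.

Lemma no_long_translates v : v <> 0 ->
  exists N, forall t c, ~ (forall i, (1 <= i <= N)%N -> T0 (tr t (INR i * v + c))).
Proof.
move=> /no_long_progression_neq0 [N HN]; exists N => t c /translates_progression [p].
exact: HN.
Qed.

Lemma hull_no_translate_ray T : in_hull T0 T ->
  forall Ti v, T Ti -> v <> 0 -> ~ (forall k : nat, T (tr Ti (INR k * v))).
Proof.
move=> [[[HT _] _] Hh] Ti v HTi hv Hall.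
have [N HN] := no_long_translates hv; have [[y0 hy0] _] := HT Ti HTi.
(* Near 0, T + a0 agrees with T0 + x + b0 on [-r, r], and r is so large that the
   tiles Ti + i v + a0 with i <= N all meet [-r, r]. *)
set r := Rabs y0 + INR N * Rabs v + 2.
have hr : 2 <= r.
  by have := Rabs_pos y0; have := Rabs_pos v; have := pos_INR N; rewrite /r; nra.
have [x [a0 [b0 [ha [_ Hag]]]]] := Hh (/ r) ltac:(apply: Rinv_0_lt_compat; lra).
rewrite Rinv_inv in Hag.
have ha1 : Rabs a0 < 1.
  by apply: Rlt_le_trans ha _; rewrite -Rinv_1; apply: Rinv_le_contravar; lra.
apply: (HN Ti (a0 - x - b0)) => i /andP [_ hiN].
have hi : INR i <= INR N by apply/le_INR/leP.
have inT : ptr T a0 (tr Ti (INR i * v + a0)) by exists (tr Ti (INR i * v)); rewrite tr_tr.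
have meet : exists y, - r <= y <= r /\ tsupp (tr Ti (INR i * v + a0)) y.
  exists (y0 + (INR i * v + a0)); split; last by rewrite /= Rplus_minus_r.
  have hy : Rabs (y0 + (INR i * v + a0)) <= r.
    have := Rabs_triang y0 (INR i * v + a0); have := Rabs_triang (INR i * v) a0.
    rewrite Rabs_mult (Rabs_pos_eq _ (pos_INR i)).
    by have := Rmult_le_compat_r _ _ _ (Rabs_pos v) hi; rewrite /r; lra.
  have := Rle_abs (y0 + (INR i * v + a0)); have := Rle_abs (- (y0 + (INR i * v + a0))).
  by rewrite Rabs_Ropp; lra.
have [[T1 [[T' [HT' ->]] e]] _] := proj1 (Hag _) (conj inT meet).
have -> : tr Ti (INR i * v + (a0 - x - b0)) = tr (tr T' (x + b0)) (- (x + b0)).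
  by rewrite -[tr T' (x + b0)]tr_tr -e tr_tr; congr tr; ring.
by rewrite tr_trN.
Qed.

Lemma union_shifts_not_legal P v : P <> [::] -> v <> 0 ->
  exists n0 : nat, ~ legal T0 (union_shifts P v n0).
Proof.
case: P => [//|t P] _ /no_long_translates [N HN].
exists N => [[x Hx]]; apply: (HN t x) => i hi; rewrite -tr_tr; apply: Hx.
by exists i; split => //; exists t; split => //; left.
Qed.

End FixedPoint.

Lemma interval_lengths m (proto : 'I_m -> tile) :
  (forall j, interval_support (proto j)) ->
  exists (a l : 'I_m -> R) mu, 0 < mu /\ (forall j, mu <= l j) /\
    forall j, ivl_tile (proto j) (a j) (l j).
Proof.
move=> Hint.
have [al Hal] : exists al : 'I_m -> (R * R)%type,
    forall j, ivl_tile (proto j) (al j).1 (al j).2.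
  apply: (@fin_all_exists _ _ (fun j (p : R * R) => ivl_tile (proto j) p.1 p.2)) => j.
  by have [u [w [huw H]]] := Hint j; exists (u, w - u); split => [|y] /=; rewrite ?H; lra.
have [mu [mu_gt0 mu_le]] := fin_pos_lower_bound (fun j => proj1 (Hal j)).
by exists (fun j => (al j).1), (fun j => (al j).2), mu.
Qed.

Theorem theorem5p4 (m : nat) (proto : 'I_m -> tile) (lam : R)
  (om : 'I_m -> seq ('I_m * R)) (T0 T : tile -> Prop) :
  (1 < m)%N ->
  is_subst_rule proto lam om ->
  (forall j, interval_support (proto j)) ->
  primitive_mx (subst_mx om) ->
  irreducible_mx (subst_mx om) ->
  fixed_point proto lam om T0 ->
  repetitive T0 ->
  in_hull T0 T ->
  (forall (Ti : tile) (v : R), T Ti -> v <> 0 ->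
     ~ (forall k : nat, T (tr Ti (INR k * v)))) /\
  (forall (P : seq tile) (v : R), P <> [::] -> is_patch (of_list P) ->
     legal T0 (of_list P) -> v <> 0 ->
     exists n : nat, ~ legal T0 (union_shifts P v n)).
Proof.
case: m proto om => [//|n] proto om n_gt0 rule Hint _ irrM fixT0 repT0 hullT.
have [a [l [mu [mu_gt0 [mu_le proto_ivl]]]]] := interval_lengths Hint.
split.
  exact (hull_no_translate_ray rule fixT0 proto_ivl mu_gt0 mu_le repT0 irrM n_gt0 hullT).
move=> P v P0 _ _ v0.
exact (union_shifts_not_legal rule fixT0 proto_ivl mu_gt0 mu_le repT0 irrM n_gt0 P0 v0).
Qed.
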